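(* Let $\mathcal P,\mathcal Q$ be two matroids on the same finite ground set, and let $\mathcal D=\mathcal P\cap\mathcal Q$. Let $S,T\in\mathcal D$ be two sets of the same size $g$. Then there exist an ordering $s_1,\ldots,s_g$ of the elements of $S$ and an ordering $t_1,\ldots,t_g$ of the elements of $T$ such that for every $i=1,\ldots,g$ the set $S-s_1+t_1-s_2+t_2-\cdots+t_{i-1}-s_i$ belongs to $\mathcal D$, where the operations are performed left to right, $X+x$ denotes $X\cup\{x\}$ and $X-a$ denotes $X\setminus\{a\}$.
   Context: A simplicial complex is a family of subsets of a ground set closed under taking subsets. A matroid is a complex in which, for every subset $W$ of the ground set, all maximal members contained in $W$ have the same size. $\mathcal D=\mathcal P\cap\mathcal Q$ means $A\in\mathcal D$ iff $A\in\mathcal P$ and $A\in\mathcal Q$. *)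

From mathcomp Require Import all_boot.
Set Implicit Arguments. Unset Strict Implicit. Unset Printing Implicit Defensive.

(* Ground set: the finite type T (all of it). A family of subsets is a {set {set T}}. *)

Definition complex (T : finType) (P : {set {set T}}) : Prop :=
  forall A B : {set T}, B \subset A -> A \in P -> B \in P.

Definition matroid (T : finType) (P : {set {set T}}) : Prop :=
  complex P /\
  forall W A B : {set T},
    maxset (fun X => (X \in P) && (X \subset W)) A ->
    maxset (fun X => (X \in P) && (X \subset W)) B ->
    #|A| = #|B|.

(* exch_prefix S s t i = S - s_1 + t_1 - s_2 + t_2 - ... - s_i + t_i,
   operations performed left to right (i full exchange steps). *)
Definition exch_prefix (T : finType) (S : {set T}) (s t : seq T) (i : nat) : {set T} :=
  foldl (fun X p => (X :\ p.1) :|: [set p.2]) S (zip (take i s) (take i t)).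

From mathcomp Require Import all_boot.
Set Implicit Arguments. Unset Strict Implicit. Unset Printing Implicit Defensive.

(* Greedy exchange, keeping Z = S - s_1 + t_1 - ... + t_(i-1) - s_i in P ∩ Q
   together with the set C of elements added so far.  Since #|Z| < #|U|,
   augmentation in P gives t ∈ U \ Z with Z + t ∈ P.  If Z + t ∈ Q, any
   s ∈ Z \ C can be removed next; otherwise, as C + t ⊆ U is independent in Q,
   the basis exchange in Q inside Z + t yields s ∈ Z \ C with Z + t - s ∈ Q,
   while Z + t - s ⊆ Z + t ∈ P.  Elements of C are never removed, so the
   removed elements exhaust S and the added ones exhaust U. *)

Section Bases.
Variable T : finType.
Implicit Types (P : {set {set T}}) (B C W Z U : {set T}).

Definition is_basis P W B := maxset (fun X => (X \in P) && (X \subset W)) B.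

Lemma basis_extend P W C : C \in P -> C \subset W ->
  exists B, [/\ is_basis P W B, C \subset B, B \in P & B \subset W].
Proof.
move=> CP CW; have CPW : (C \in P) && (C \subset W) by rewrite CP.
have [B bB CB] := @maxset_exists _ (fun X => (X \in P) && (X \subset W)) C CPW.
by exists B; have /andP[] := maxsetp bB.
Qed.

Lemma complexI P1 P2 : complex P1 -> complex P2 -> complex (P1 :&: P2).
Proof.
move=> c1 c2 A B BA; rewrite !inE => /andP[A1 A2].
by rewrite (c1 A B) ?(c2 A B).
Qed.

Lemma basis_setU1 P Z t : complex P -> Z \in P -> t |: Z \notin P ->
  is_basis P (t |: Z) Z.
Proof.
move=> cP ZP tZP; apply/maxsetP; split=> [|B /andP[BP BtZ] ZB].
  by rewrite ZP subsetU1.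
apply/eqP; rewrite eqEsubset ZB andbT; apply/subsetP=> x xB.
have /setU1P[ext|//] := subsetP BtZ x xB.
have tZB : t |: Z \subset B by rewrite subUset sub1set -ext xB ZB.
by rewrite (cP B _ tZB BP) in tZP.
Qed.

Lemma matroid_augment P Z U : matroid P -> Z \in P -> U \in P -> #|Z| < #|U| ->
  exists2 t, t \in U :\: Z & t |: Z \in P.
Proof.
move=> [cP eqB] ZP UP ltZU.
have [BZ [bZ ZBZ BZP BZW]] := basis_extend ZP (subsetUl Z U).
have [BU [bU UBU _ _]] := basis_extend UP (subsetUr Z U).
have /subsetPn[t tBZ tZ] : ~~ (BZ \subset Z).
  apply: contraTN ltZU => BZZ; rewrite -leqNgt.
  by rewrite (leq_trans (subset_leq_card UBU)) // -(eqB _ _ _ bZ bU) subset_leq_card.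
exists t; last by apply: (cP BZ); rewrite // subUset sub1set tBZ.
by move: (subsetP BZW t tBZ); rewrite !inE (negbTE tZ).
Qed.

Lemma matroid_exchange P Z C t : matroid P -> Z \in P -> C \subset Z ->
  t |: C \in P -> t \notin Z -> t |: Z \notin P ->
  exists2 s, s \in Z :\: C & t |: (Z :\ s) \in P.
Proof.
move=> [cP eqB] ZP CZ tCP tZ tZP; set W := t |: Z.
(* Z is a basis of W, so a basis M of W through t + C misses a single s. *)
have [M [bM tCM MP MW]] := basis_extend tCP (setUS [set t] CZ).
have cardM : #|M| = #|Z| := eqB _ _ _ bM (basis_setU1 cP ZP tZP).
have /subsetPn[s sW sM] : ~~ (W \subset M).
  by apply: contraNN tZP => WM; rewrite (cP M).
have [st sC] : s != t /\ s \notin C.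
  by split; apply: contraNN sM => h; apply: (subsetP tCM); rewrite !inE h ?orbT.
have sZ : s \in Z by move: sW; rewrite !inE (negbTE st).
exists s; first by rewrite inE sC.
suff -> : t |: (Z :\ s) = M by [].
have cardtZs : #|t |: (Z :\ s)| = #|Z|.
  by rewrite cardsU1 in_setD1 (negbTE tZ) andbF (cardsD1 s Z) sZ.
apply/esym/eqP; rewrite eqEcard cardtZs cardM leqnn andbT.
apply/subsetP=> x xM; have xs : x != s by apply: contraNneq sM => <-.
by move: (subsetP MW x xM); rewrite !inE xs.
Qed.
End Bases.

Lemma setD1U1 (T : finType) (A : {set T}) (a b : T) :
  b != a -> (a |: A) :\ b = a |: (A :\ b).
Proof.
move=> ba; apply/setP=> x; rewrite !inE.
by case: (eqVneq x a) => [->|]; rewrite 1?eq_sym ?ba.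
Qed.

Lemma uniq_set_cons (T : finType) (A : {set T}) (x : T) (s : seq T) :
  x \in A -> uniq s -> [set y in s] = A :\ x ->
  uniq (x :: s) /\ [set y in x :: s] = A.
Proof.
move=> xA us sE; have : x \notin [set y in s] by rewrite sE setD11.
rewrite inE => xs; split; first by rewrite /= xs us.
by rewrite -(setD1K xA) -sE; apply/setP=> y; rewrite !inE.
Qed.

Lemma exch_prefix_cons (T : finType) (X : {set T}) (x y : T) (s t : seq T) (i : nat) :
  exch_prefix X (x :: s) (y :: t) i.+1 = exch_prefix (y |: (X :\ x)) s t i.
Proof. by rewrite /exch_prefix /= setUC. Qed.

Section Intersection.
Variables (T : finType) (P Q : {set {set T}}).
Hypotheses (mP : matroid P) (mQ : matroid Q).
Local Notation D := (P :&: Q).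

Lemma intersection_exchange (Z U C : {set T}) :
  Z \in D -> U \in D -> C \proper Z -> C \subset U -> #|Z| < #|U| ->
  exists s t, [/\ s \in Z :\: C, t \in U :\: Z & t |: (Z :\ s) \in D].
Proof.
rewrite !inE => /andP[ZP ZQ] /andP[UP UQ] /properP[CZ [x xZ xC]] CU ltZU.
have [t tUZ tZP] := matroid_augment mP ZP UP ltZU.
have /andP[tZ tU] : (t \notin Z) && (t \in U) by rewrite -in_setD.
have tZs_sub s : t |: (Z :\ s) \subset t |: Z by apply/setUS/subD1set.
have [tZQ | tZQ] := boolP (t |: Z \in Q).
  exists x, t; rewrite !inE xC xZ tZ tU.
  by rewrite (mP.1 _ _ (tZs_sub x) tZP) (mQ.1 _ _ (tZs_sub x) tZQ).
have tCQ : t |: C \in Q by apply: (mQ.1 U); rewrite // subUset sub1set tU.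
have [s sZC tZsQ] := matroid_exchange mQ ZQ CZ tCQ tZ tZQ.
by exists s, t; rewrite sZC tUZ inE (mP.1 _ _ (tZs_sub s) tZP) tZsQ.
Qed.

Fixpoint exchange_chain (X : {set T}) (s t : seq T) : bool :=
  match s, t with
  | x :: s', y :: t' => (X :\ x \in D) && exchange_chain (y |: (X :\ x)) s' t'
  | _, _ => true
  end.

Lemma exchange_chainP (X : {set T}) (s t : seq T) (x0 : T) :
  size s <= size t -> exchange_chain X s t ->
  forall i, i < size s -> exch_prefix X s t i :\ nth x0 s i \in D.
Proof.
elim: s X t => [|x s IH] X [|y t] //= lest /andP[XxD chain] [|i] // lti.
by rewrite exch_prefix_cons; apply: IH.
Qed.

Lemma exchange_sequences (Z U C : {set T}) :
  Z \in D -> U \in D -> C \subset Z -> C \subset U -> #|U| = #|Z|.+1 ->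
  exists t0 s t, [/\ uniq s, [set x in s] = Z :\: C,
    uniq (t0 :: t), [set x in t0 :: t] = U :\: C & exchange_chain (t0 |: Z) s t].
Proof.
move eqn: #|Z :\: C| => n; elim: n Z C eqn => [|n IH] Z C cardZC ZD UD CZ CU cardU.
  have ZC : Z = C.
    by apply/eqP; rewrite eqEsubset CZ andbT -setD_eq0 -cards_eq0 cardZC.
  have /cards1P[t0 UC] : #|U :\: C| == 1.
    by rewrite cardsD (setIidPr CU) cardU ZC subSnn.
  exists t0, [::], [::]; rewrite UC ZC setDv.
  by split=> //; apply/setP=> x; rewrite !inE.
have CZ' : C \proper Z by rewrite properE CZ -setD_eq0 -cards_eq0 cardZC.
have ltZU : #|Z| < #|U| by rewrite cardU.
have [s1 [t1 [s1ZC t1UZ Z'D]]] := intersection_exchange ZD UD CZ' CU ltZU.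
have /andP[t1Z t1U] : (t1 \notin Z) && (t1 \in U) by rewrite -in_setD.
have /andP[s1C s1Z] : (s1 \notin C) && (s1 \in Z) by rewrite -in_setD.
have s1t1 : s1 != t1 by apply: contraNneq t1Z => <-.
have Z'C' : (t1 |: (Z :\ s1)) :\: (t1 |: C) = (Z :\: C) :\ s1.
  apply/setP=> y; rewrite !inE; case: (eqVneq y t1) => [->|_] /=.
    by rewrite (negbTE t1Z) !andbF.
  by rewrite andbCA.
have UC' : U :\: (t1 |: C) = (U :\: C) :\ t1.
  by apply/setP=> y; rewrite !inE negb_or andbA.
have C'Z' : t1 |: C \subset t1 |: (Z :\ s1).
  apply/setUS/subsetP=> y yC; rewrite !inE (subsetP CZ) // andbT.
  by apply: contraNneq s1C => <-.
have C'U : t1 |: C \subset U by rewrite subUset sub1set t1U.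
have cardU' : #|U| = #|t1 |: (Z :\ s1)|.+1.
  by rewrite cardU cardsU1 in_setD1 (negbTE t1Z) andbF (cardsD1 s1 Z) s1Z.
have cardZ'C' : #|(t1 |: (Z :\ s1)) :\: (t1 |: C)| = n.
  by apply/eqP; rewrite -eqSS -cardZC Z'C' (cardsD1 s1 (Z :\: C)) s1ZC.
have [t0 [s [t [us sE ut tE chain]]]] :=
  IH _ _ cardZ'C' Z'D UD C'Z' C'U cardU'.
rewrite Z'C' in sE; rewrite UC' in tE.
have [us1 s1sE] := uniq_set_cons s1ZC us sE.
have t1UC : t1 \in U :\: C by rewrite inE t1U andbT (contraNN (subsetP CZ t1)).
have [ut1 t1tE] := uniq_set_cons t1UC ut tE.
exists t1, (s1 :: s), (t0 :: t); split=> //=.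
by rewrite setD1U1 // Z'D.
Qed.
End Intersection.

Theorem theorem3p1 (T : finType) (P Q : {set {set T}}) :
  matroid P -> matroid Q ->
  forall (S U : {set T}) (g : nat),
    S \in P :&: Q -> U \in P :&: Q -> #|S| = g -> #|U| = g ->
    exists (s t : g.-tuple T),
      [/\ uniq s, [set x in s] = S, uniq t, [set x in t] = U &
        forall i : 'I_g, exch_prefix S s t i :\ tnth s i \in P :&: Q].
Proof.
move=> mP mQ S U [|n] SD UD cardS cardU.
  exists [tuple], [tuple]; rewrite (cards0_eq cardS) (cards0_eq cardU).
  by split=> [||||[]] //; apply/setP=> x; rewrite !inE.
have /card_gt0P[s1 s1S] : 0 < #|S| by rewrite cardS.
have SsD : S :\ s1 \in P :&: Q := complexI mP.1 mQ.1 (subD1set S s1) SD.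
have cardU' : #|U| = #|S :\ s1|.+1 by rewrite cardU -cardS (cardsD1 s1 S) s1S.
have [t0 [s [t [us sE ut tE chain]]]] :=
  exchange_sequences mP mQ SsD UD (sub0set _) (sub0set _) cardU'.
rewrite !setD0 in sE tE.
have [us1 s1sE] := uniq_set_cons s1S us sE.
have size_s : size s = n.
  by apply/eqP; rewrite -eqSS -cardS -s1sE cardsE (card_uniqP us1).
have size_t : size t = n.
  by apply/eqP; rewrite -eqSS -cardU -tE cardsE (card_uniqP ut).
have tuple_s : size (s1 :: s) == n.+1 by rewrite /= size_s.
have tuple_t : size (t0 :: t) == n.+1 by rewrite /= size_t.
exists (Tuple tuple_s), (Tuple tuple_t); split=> // i; rewrite (tnth_nth t0).
by apply: exchange_chainP; rewrite /= ?SsD ?size_s ?size_t.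
Qed.
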